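(* Let $0<q<1$, $I=[0,b)$ with $0<b\le\infty$, $R,S,T:I\to\mathbb{R}$ continuous. For an admissible function $u$ and $t\in\mathbb{R}$ with $1+tJ_u(x)\ne0$ on $I$ define $(\mathcal{B}^+_tu)(x)=u(x)+\dfrac{tE_u(x)}{1+tJ_u(x)}$. Then for $t_1,t_2\in\mathbb{R}$ and admissible $u_0$ such that $\mathcal{B}^+_{t_2}u_0$ is defined and admissible, $\mathcal{B}^+_{t_1}(\mathcal{B}^+_{t_2}u_0)$ is defined, and $1-(1-q)x(R(x)+S(x)\,\mathcal{B}^+_{t_1}\mathcal{B}^+_{t_2}u_0(x))>0$ on $I$, one has $$\mathcal{B}^+_{t_1}\circ\mathcal{B}^+_{t_2}u_0=\mathcal{B}^+_{t_1+t_2}u_0 .$$ In particular, for a fixed $V$, the maps $\mathcal{B}^+_t$ act (where defined) as a one-parameter group on the solutions of the $q$-Riccati equation $V(x)=\partial_qu(x)-T(x)u(x)+R(x)u(qx)+S(x)u(x)u(qx)$, and this action is transitive on solutions $u$ continuous on $I$ with $1-(1-q)x(R(x)+S(x)u(x))>0$ on $I$: each such solution equals $\mathcal{B}^+_tu_0$ for $t=u(0)-u_0(0)$.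
   Context: $\partial_q f(x)=\dfrac{f(x)-f(qx)}{(1-q)x}$ for $x\neq0$; $\int_0^x f(t)\,d_qt=\sum_{n\ge0}(1-q)q^nx\,f(q^nx)$. A function $u:I\to\mathbb{R}$ is admissible if it is continuous on $I$ and for all $y\in I$: $1-(1-q)y(R(y)+u(y)S(y))>0$ and $1-(1-q)y(T(y)-u(qy)S(y))>0$. For admissible $u$: $$E_u(x)=\exp\Big(\frac{1}{1-q}\int_0^x\frac1y\ln\frac{1-(1-q)y[R(y)+u(y)S(y)]}{1-(1-q)y[T(y)-u(qy)S(y)]}d_qy\Big),\qquad J_u(x)=\int_0^x\frac{S(y)E_u(y)}{1-(1-q)y[R(y)+u(y)S(y)]}d_qy.$$ *)

From Stdlib Require Import Reals.
From Coquelicot Require Import Coquelicot.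
Open Scope R_scope.

Definition inI (b : Rbar) (x : R) : Prop := 0 <= x /\ Rbar_lt (Finite x) b.

Definition cont_on (b : Rbar) (f : R -> R) : Prop :=
  forall x, inI b x -> filterlim f (within (inI b) (locally x)) (locally (f x)).

(* Jackson q-derivative (for x <> 0). *)
Definition qderiv (q : R) (f : R -> R) (x : R) : R :=
  (f x - f (q * x)) / ((1 - q) * x).

Definition qint (q : R) (f : R -> R) (x : R) : R :=
  Series (fun n => (1 - q) * q ^ n * x * f (q ^ n * x)).

Definition admissible (q : R) (b : Rbar) (R0 S T : R -> R) (u : R -> R) : Prop :=
  cont_on b u /\
  forall y, inI b y ->
    1 - (1 - q) * y * (R0 y + u y * S y) > 0 /\
    1 - (1 - q) * y * (T y - u (q * y) * S y) > 0.

Definition Eu (q : R) (R0 S T : R -> R) (u : R -> R) (x : R) : R :=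
  exp (/ (1 - q) *
       qint q (fun y => / y * ln ((1 - (1 - q) * y * (R0 y + u y * S y)) /
                                  (1 - (1 - q) * y * (T y - u (q * y) * S y)))) x).

Definition Ju (q : R) (R0 S T : R -> R) (u : R -> R) (x : R) : R :=
  qint q (fun y => S y * Eu q R0 S T u y / (1 - (1 - q) * y * (R0 y + u y * S y))) x.

Definition Bplus (q : R) (R0 S T : R -> R) (t : R) (u : R -> R) (x : R) : R :=
  u x + t * Eu q R0 S T u x / (1 + t * Ju q R0 S T u x).

Definition Bplus_defined (q : R) (b : Rbar) (R0 S T : R -> R) (t : R) (u : R -> R) : Prop :=
  forall x, inI b x -> 1 + t * Ju q R0 S T u x <> 0.

(* u solves the q-Riccati equation with right-hand side V on I (x <> 0, where
   the q-derivative is defined). *)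
Definition qRiccati_sol (q : R) (b : Rbar) (R0 S T V : R -> R) (u : R -> R) : Prop :=
  forall x, inI b x -> x <> 0 ->
    V x = qderiv q u x - T x * u x + R0 x * u (q * x) + S x * u x * u (q * x).

(* E_u and J_u are characterised by the q-difference relations
     E_u(x) B_u(x) = E_u(qx) A_u(x),   J_u(x) = J_u(qx) + (1-q) x S(x) E_u(x) / A_u(x),
   where A_u, B_u are the numerator and denominator of the logarithm in E_u, together with
   E_u -> 1 and J_u -> 0 along the orbit q^n x: a function invariant under x |-> qx that has a
   limit along the orbit is constant.
   For v = B^+_t u one finds A_v = A_u d / D and B_v = B_u D / d with D = 1 + t J_u(x) and
   d = 1 + t J_u(qx). Hence E_v D^2 / E_u and J_v - J_u / D are q-invariant, so E_v = E_u / D^2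
   and J_v = J_u / D, and the group law becomes a rational identity; the same computation shows
   that B^+_t leaves the Riccati operator unchanged.
   For two solutions u, u0 the difference w = u - u0 satisfies w(x) B_{u0}(x) = w(qx) A_u(x),
   so w either vanishes on a whole orbit or E_{u0} / w - J_{u0} is q-invariant there; its limit
   along the orbit is 1 / w(0), i.e. u = B^+_{w(0)} u0. *)

From Stdlib Require Import Reals Lra.
From Coquelicot Require Import Coquelicot.
Open Scope R_scope.

Lemma inI_qpow (b : Rbar) (q x : R) (n : nat) :
  0 < q < 1 -> inI b x -> inI b (q ^ n * x).
Proof.
  intros Hq [Hx Hxb]. assert (0 < q ^ n <= 1) as Hqn.
  { split; [apply pow_lt; lra|]. rewrite <- (pow1 n). apply pow_incr; lra. }
  split; [nra|]. eapply Rbar_le_lt_trans; [|exact Hxb]. simpl; nra.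
Qed.

Lemma inI_q (b : Rbar) (q x : R) : 0 < q < 1 -> inI b x -> inI b (q * x).
Proof. intros Hq Hx. rewrite <- (pow_1 q). now apply inI_qpow. Qed.

Lemma qorbit_lim (q x : R) : 0 < q < 1 -> is_lim_seq (fun n => q ^ n * x) 0.
Proof.
  intros Hq. replace (Finite 0) with (Rbar_mult 0 x) by (simpl; f_equal; ring).
  apply is_lim_seq_scal_r, is_lim_seq_geom. rewrite Rabs_pos_eq; lra.
Qed.

Lemma cont_on_qorbit_lim (b : Rbar) (q : R) (f : R -> R) (x : R) :
  0 < q < 1 -> cont_on b f -> inI b x -> is_lim_seq (fun n => f (q ^ n * x)) (f 0).
Proof.
  intros Hq Hf Hx. assert (H0 : inI b 0).
  { destruct Hx as [Hx Hxb]. split; [lra|]. eapply Rbar_le_lt_trans; [|exact Hxb]. simpl; lra. }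
  eapply filterlim_comp; [|exact (Hf 0 H0)].
  intros P HP. apply (qorbit_lim q x Hq) in HP. unfold filtermap in *.
  eapply filter_imp; [|exact HP]. intros n Hn. apply Hn, inI_qpow; auto.
Qed.

Lemma is_lim_seq_bounded (s : nat -> R) (l : R) :
  is_lim_seq s l -> exists M, forall n, Rabs (s n) <= M.
Proof. intros Hs. destruct (filterlim_bounded s (ex_intro _ l Hs)) as [M HM]. now exists M. Qed.

Lemma qorbit_ind (b : Rbar) (q : R) (P : R -> Prop) (x : R) :
  0 < q < 1 -> (forall y, inI b y -> P y -> P (q * y)) -> inI b x -> P x ->
  forall n, P (q ^ n * x).
Proof.
  intros Hq HP Hx Px. induction n as [|n IH]; simpl; [now rewrite Rmult_1_l|].
  rewrite Rmult_assoc. auto using inI_qpow.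
Qed.

Lemma is_lim_seq_const_eq (s : nat -> R) (c l : R) :
  (forall n, s n = c) -> is_lim_seq s l -> c = l.
Proof.
  intros Hs Hl. apply (is_lim_seq_ext _ (fun _ => c)) in Hl; [|exact Hs].
  apply is_lim_seq_unique in Hl. rewrite Lim_seq_const in Hl. now injection Hl.
Qed.

Lemma qinvariant_lim_eq (b : Rbar) (q : R) (h : R -> R) (x l : R) :
  0 < q < 1 -> (forall y, inI b y -> h (q * y) = h y) -> inI b x ->
  is_lim_seq (fun n => h (q ^ n * x)) l -> h x = l.
Proof.
  intros Hq Hh Hx. apply is_lim_seq_const_eq.
  apply (qorbit_ind b q (fun y => h y = h x)); auto. intros y Hy <-. auto.
Qed.

Section JacksonIntegral.
Variables (q : R) (f : R -> R) (M : R).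
Hypothesis Hq : 0 < q < 1.

Lemma is_series_scal_geom (c : R) : is_series (fun n => c * q ^ n) (c / (1 - q)).
Proof. apply (is_series_scal_l c (fun n => q ^ n)), is_series_geom. rewrite Rabs_pos_eq; lra. Qed.

Lemma qint_term_abs_le (x : R) (n : nat) : 0 <= x ->
  (forall n, Rabs (f (q ^ n * x)) <= M) ->
  Rabs ((1 - q) * q ^ n * x * f (q ^ n * x)) <= (1 - q) * x * M * q ^ n.
Proof.
  intros Hx Hf. assert (0 < q ^ n) by (apply pow_lt; lra).
  rewrite !Rabs_mult, (Rabs_pos_eq (1 - q)), (Rabs_pos_eq (q ^ n)), (Rabs_pos_eq x) by lra.
  specialize (Hf n). assert (0 <= (1 - q) * q ^ n * x) by (apply Rmult_le_pos; nra).
  nra.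
Qed.

Lemma qint_terms_abs_ex (x : R) : 0 <= x -> (forall n, Rabs (f (q ^ n * x)) <= M) ->
  ex_series (fun n => Rabs ((1 - q) * q ^ n * x * f (q ^ n * x))).
Proof.
  intros Hx Hf.
  apply (@ex_series_le R_AbsRing R_CompleteNormedModule _ (fun n => (1 - q) * x * M * q ^ n)).
  - intros n. apply (Rle_trans _ _ _ (Req_le _ _ (Rabs_Rabsolu _))). now apply qint_term_abs_le.
  - eexists. apply is_series_scal_geom.
Qed.

Lemma qint_abs_le (x : R) : 0 <= x -> (forall n, Rabs (f (q ^ n * x)) <= M) ->
  Rabs (qint q f x) <= x * M.
Proof.
  intros Hx Hf. eapply Rle_trans; [now apply Series_Rabs, qint_terms_abs_ex|].
  replace (x * M) with (Series (fun n => (1 - q) * x * M * q ^ n)).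
  - apply Series_le; [split; [apply Rabs_pos | now apply qint_term_abs_le]|].
    eexists. apply is_series_scal_geom.
  - rewrite (is_series_unique _ _ (is_series_scal_geom _)). field. lra.
Qed.

Lemma qint_step (x : R) : 0 <= x -> (forall n, Rabs (f (q ^ n * x)) <= M) ->
  qint q f x = (1 - q) * x * f x + qint q f (q * x).
Proof.
  intros Hx Hf. unfold qint. rewrite Series_incr_1.
  - simpl. rewrite !Rmult_1_r, Rmult_1_l. f_equal. apply Series_ext. intros n.
    replace (q * q ^ n * x) with (q ^ n * (q * x)) by ring. ring.
  - apply ex_series_Rabs. now apply qint_terms_abs_ex.
Qed.

Lemma qint_qorbit_lim (x : R) : 0 <= x -> (forall n, Rabs (f (q ^ n * x)) <= M) ->
  is_lim_seq (fun m => qint q f (q ^ m * x)) 0.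
Proof.
  intros Hx Hf.
  assert (Hm : forall m, Rabs (qint q f (q ^ m * x)) <= q ^ m * x * M).
  { intros m. assert (0 < q ^ m) by (apply pow_lt; lra).
    apply qint_abs_le; [nra|]. intros n.
    replace (q ^ n * (q ^ m * x)) with (q ^ (n + m) * x) by (rewrite pow_add; ring). apply Hf. }
  apply (is_lim_seq_le_le (fun m => - (q ^ m * (x * M))) _ (fun m => q ^ m * (x * M))).
  - intros m. specialize (Hm m). apply Rabs_le_between in Hm. lra.
  - apply (is_lim_seq_ext (fun m => q ^ m * (- (x * M)))); [intros; ring|]. now apply qorbit_lim.
  - now apply qorbit_lim.
Qed.

End JacksonIntegral.

Lemma Rabs_ln_le (z : R) : 0 < z -> Rabs (ln z) <= Rabs (z - 1) * (1 + / z).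
Proof.
  intros Hz. assert (Hzi : 0 < / z) by now apply Rinv_0_lt_compat.
  assert (Hl : ln z <= z - 1) by (pose proof (exp_ineq1_le (ln z)); rewrite exp_ln in *; lra).
  assert (Hli : - ln z <= / z - 1).
  { rewrite <- ln_Rinv by lra. pose proof (exp_ineq1_le (ln (/ z))). rewrite exp_ln in *; lra. }
  assert (Hzz : z * / z = 1) by (field; lra).
  destruct (Rle_dec 1 z).
  - assert (0 <= ln z) by (rewrite <- ln_1; apply ln_le; lra).
    rewrite (Rabs_pos_eq (z - 1)), Rabs_pos_eq by lra. nra.
  - assert (ln z <= 0) by (rewrite <- ln_1; apply ln_le; lra).
    rewrite (Rabs_left1 (z - 1)), Rabs_left1 by lra. nra.
Qed.

Definition Eu_num (q : R) (R0 S u : R -> R) (y : R) : R :=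
  1 - (1 - q) * y * (R0 y + u y * S y).
Definition Eu_den (q : R) (S T u : R -> R) (y : R) : R :=
  1 - (1 - q) * y * (T y - u (q * y) * S y).
Definition Eu_integrand (q : R) (R0 S T u : R -> R) (y : R) : R :=
  / y * ln (Eu_num q R0 S u y / Eu_den q S T u y).
Definition Ju_integrand (q : R) (R0 S T u : R -> R) (y : R) : R :=
  S y * Eu q R0 S T u y / Eu_num q R0 S u y.

Lemma Eu_exp (q : R) (R0 S T u : R -> R) (x : R) :
  Eu q R0 S T u x = exp (/ (1 - q) * qint q (Eu_integrand q R0 S T u) x).
Proof. reflexivity. Qed.

Lemma Ju_qint (q : R) (R0 S T u : R -> R) (x : R) :
  Ju q R0 S T u x = qint q (Ju_integrand q R0 S T u) x.
Proof. reflexivity. Qed.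

Section Admissible.
Variables (q : R) (b : Rbar) (R0 S T u : R -> R).
Hypothesis Hq : 0 < q < 1.
Hypotheses (HR : cont_on b R0) (HS : cont_on b S) (HT : cont_on b T).
Hypothesis Hu : admissible q b R0 S T u.
Let Hcu : cont_on b u := proj1 Hu.

Lemma Eu_num_den_pos (y : R) : inI b y -> 0 < Eu_num q R0 S u y /\ 0 < Eu_den q S T u y.
Proof. intros Hy. destruct (proj2 Hu y Hy). unfold Eu_num, Eu_den. lra. Qed.

Let cont_on_qorbit_lim_q (f : R -> R) (x : R) : cont_on b f -> inI b x ->
  is_lim_seq (fun n => f (q * (q ^ n * x))) (f 0).
Proof.
  intros Hf Hx. apply (is_lim_seq_ext (fun n => f (q ^ n * (q * x)))).
  - intros n. f_equal. ring.
  - apply (cont_on_qorbit_lim b); auto using inI_q.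
Qed.

Lemma Eu_num_qorbit_lim (x : R) : inI b x -> is_lim_seq (fun n => Eu_num q R0 S u (q ^ n * x)) 1.
Proof.
  intros Hx. unfold Eu_num.
  replace (Finite 1) with (Finite (1 - (1 - q) * 0 * (R0 0 + u 0 * S 0))) by (f_equal; ring).
  apply is_lim_seq_minus', is_lim_seq_mult'; [apply is_lim_seq_const|..].
  - apply is_lim_seq_mult'; [apply is_lim_seq_const | now apply qorbit_lim].
  - apply is_lim_seq_plus', is_lim_seq_mult'; apply (cont_on_qorbit_lim b); auto.
Qed.

Lemma Eu_den_qorbit_lim (x : R) : inI b x -> is_lim_seq (fun n => Eu_den q S T u (q ^ n * x)) 1.
Proof.
  intros Hx. unfold Eu_den.
  replace (Finite 1) with (Finite (1 - (1 - q) * 0 * (T 0 - u 0 * S 0))) by (f_equal; ring).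
  apply is_lim_seq_minus', is_lim_seq_mult'; [apply is_lim_seq_const|..].
  - apply is_lim_seq_mult'; [apply is_lim_seq_const | now apply qorbit_lim].
  - apply is_lim_seq_minus', is_lim_seq_mult';
      [apply (cont_on_qorbit_lim b) | apply cont_on_qorbit_lim_q | apply (cont_on_qorbit_lim b)];
      auto.
Qed.

Let Eu_integrand_majorant (y : R) : R :=
  (1 - q) * (Rabs (R0 y + u y * S y) * (1 + / Eu_num q R0 S u y)
             + Rabs (T y - u (q * y) * S y) * (1 + / Eu_den q S T u y)).

Lemma Eu_integrand_abs_le (y : R) : inI b y ->
  Rabs (Eu_integrand q R0 S T u y) <= Eu_integrand_majorant y.
Proof.
  intros Hy. destruct (Eu_num_den_pos y Hy) as [HA HB].
  assert (HAi : 0 < / Eu_num q R0 S u y) by now apply Rinv_0_lt_compat.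
  assert (HBi : 0 < / Eu_den q S T u y) by now apply Rinv_0_lt_compat.
  destruct (Req_dec y 0) as [->|Hy0].
  { (* [/ 0] is junk, but it multiplies [ln 1 = 0] *)
    unfold Eu_integrand. replace (Eu_num q R0 S u 0 / Eu_den q S T u 0) with 1
      by (unfold Eu_num, Eu_den; field; lra).
    rewrite ln_1, Rmult_0_r, Rabs_R0. unfold Eu_integrand_majorant.
    pose proof (Rabs_pos (R0 0 + u 0 * S 0)). pose proof (Rabs_pos (T 0 - u (q * 0) * S 0)).
    apply Rmult_le_pos; nra. }
  assert (Hyp : 0 < y) by (destruct Hy; lra).
  assert (EA : Rabs (Eu_num q R0 S u y - 1) = (1 - q) * y * Rabs (R0 y + u y * S y)).
  { unfold Eu_num. replace (1 - (1 - q) * y * (R0 y + u y * S y) - 1)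
      with (- ((1 - q) * y) * (R0 y + u y * S y)) by ring.
    rewrite Rabs_mult, Rabs_Ropp, Rabs_pos_eq; nra. }
  assert (EB : Rabs (Eu_den q S T u y - 1) = (1 - q) * y * Rabs (T y - u (q * y) * S y)).
  { unfold Eu_den. replace (1 - (1 - q) * y * (T y - u (q * y) * S y) - 1)
      with (- ((1 - q) * y) * (T y - u (q * y) * S y)) by ring.
    rewrite Rabs_mult, Rabs_Ropp, Rabs_pos_eq; nra. }
  replace (Eu_integrand_majorant y)
    with (/ y * (Rabs (Eu_num q R0 S u y - 1) * (1 + / Eu_num q R0 S u y)
                 + Rabs (Eu_den q S T u y - 1) * (1 + / Eu_den q S T u y)))
    by (rewrite EA, EB; unfold Eu_integrand_majorant; field; lra).
  unfold Eu_integrand. rewrite ln_div, Rabs_mult, (Rabs_pos_eq (/ y)) by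
    (try left; try apply Rinv_0_lt_compat; lra).
  apply Rmult_le_compat_l; [left; now apply Rinv_0_lt_compat|].
  pose proof (Rabs_triang (ln (Eu_num q R0 S u y)) (- ln (Eu_den q S T u y))) as Htr.
  rewrite Rabs_Ropp in Htr.
  pose proof (Rabs_ln_le _ HA). pose proof (Rabs_ln_le _ HB). unfold Rminus at 1. lra.
Qed.

Lemma Eu_integrand_majorant_qorbit_lim (x : R) : inI b x ->
  is_lim_seq (fun n => Eu_integrand_majorant (q ^ n * x))
    ((1 - q) * (Rabs (R0 0 + u 0 * S 0) * (1 + / 1) + Rabs (T 0 - u 0 * S 0) * (1 + / 1))).
Proof.
  intros Hx. unfold Eu_integrand_majorant.
  apply is_lim_seq_mult'; [apply is_lim_seq_const|].
  apply is_lim_seq_plus'; apply is_lim_seq_mult'.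
  - apply (is_lim_seq_abs _ (Finite _)), is_lim_seq_plus', is_lim_seq_mult';
      apply (cont_on_qorbit_lim b); auto.
  - apply is_lim_seq_plus'; [apply is_lim_seq_const|].
    apply (is_lim_seq_inv _ 1); [now apply Eu_num_qorbit_lim | intros Hc; injection Hc; lra].
  - apply (is_lim_seq_abs _ (Finite _)), is_lim_seq_minus', is_lim_seq_mult';
      [apply (cont_on_qorbit_lim b) | apply cont_on_qorbit_lim_q | apply (cont_on_qorbit_lim b)];
      auto.
  - apply is_lim_seq_plus'; [apply is_lim_seq_const|].
    apply (is_lim_seq_inv _ 1); [now apply Eu_den_qorbit_lim | intros Hc; injection Hc; lra].
Qed.

Lemma Eu_integrand_qorbit_bounded (x : R) : inI b x ->
  exists M, forall n, Rabs (Eu_integrand q R0 S T u (q ^ n * x)) <= M.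
Proof.
  intros Hx. destruct (is_lim_seq_bounded _ _ (Eu_integrand_majorant_qorbit_lim x Hx)) as [M HM].
  exists M. intros n. eapply Rle_trans; [apply Eu_integrand_abs_le, inI_qpow; auto|].
  eapply Rle_trans; [apply Rle_abs | apply HM].
Qed.

Lemma Eu_pos (x : R) : 0 < Eu q R0 S T u x.
Proof. apply exp_pos. Qed.

Lemma Eu_step (x : R) : inI b x ->
  Eu q R0 S T u x * Eu_den q S T u x = Eu q R0 S T u (q * x) * Eu_num q R0 S u x.
Proof.
  intros Hx. destruct (Req_dec x 0) as [->|Hx0].
  { replace (q * 0) with 0 by ring. unfold Eu_num, Eu_den. ring. }
  destruct (Eu_integrand_qorbit_bounded x Hx) as [M HM].
  destruct (Eu_num_den_pos x Hx) as [HA HB].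
  rewrite !Eu_exp, (qint_step q _ M Hq x) by (destruct Hx; auto with real).
  unfold Eu_integrand at 1.
  replace (/ (1 - q) * ((1 - q) * x * (/ x * ln (Eu_num q R0 S u x / Eu_den q S T u x))
                        + qint q (Eu_integrand q R0 S T u) (q * x)))
    with (ln (Eu_num q R0 S u x / Eu_den q S T u x)
          + / (1 - q) * qint q (Eu_integrand q R0 S T u) (q * x))
    by (field; lra).
  rewrite exp_plus, exp_ln by (apply Rdiv_lt_0_compat; lra). field. lra.
Qed.

Lemma Eu_qorbit_lim (x : R) : inI b x -> is_lim_seq (fun n => Eu q R0 S T u (q ^ n * x)) 1.
Proof.
  intros Hx. destruct (Eu_integrand_qorbit_bounded x Hx) as [M HM].
  apply (is_lim_seq_ext (fun n => exp (/ (1 - q) * qint q (Eu_integrand q R0 S T u) (q ^ n * x)))).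
  { intros n. symmetry. apply Eu_exp. }
  replace (Finite 1) with (Finite (exp 0)) by now rewrite exp_0.
  apply is_lim_seq_continuous.
  - apply derivable_continuous_pt, derivable_pt_exp.
  - replace (Finite 0) with (Finite (/ (1 - q) * 0)) by (f_equal; ring).
    apply is_lim_seq_mult'; [apply is_lim_seq_const|].
    apply (qint_qorbit_lim q _ M Hq); [destruct Hx|]; auto.
Qed.

Lemma Ju_integrand_qorbit_bounded (x : R) : inI b x ->
  exists M, forall n, Rabs (Ju_integrand q R0 S T u (q ^ n * x)) <= M.
Proof.
  intros Hx. apply (is_lim_seq_bounded _ (S 0 * 1 / 1)).
  apply is_lim_seq_div'; [apply is_lim_seq_mult'|..].
  - apply (cont_on_qorbit_lim b); auto.
  - now apply Eu_qorbit_lim.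
  - now apply Eu_num_qorbit_lim.
  - lra.
Qed.

Lemma Ju_step (x : R) : inI b x ->
  Ju q R0 S T u x
  = Ju q R0 S T u (q * x) + (1 - q) * x * (S x * Eu q R0 S T u x / Eu_num q R0 S u x).
Proof.
  intros Hx. destruct (Ju_integrand_qorbit_bounded x Hx) as [M HM].
  rewrite !Ju_qint, (qint_step q _ M Hq x) by (destruct Hx; auto). unfold Ju_integrand at 1. ring.
Qed.

Lemma Ju_qorbit_lim (x : R) : inI b x -> is_lim_seq (fun n => Ju q R0 S T u (q ^ n * x)) 0.
Proof.
  intros Hx. destruct (Ju_integrand_qorbit_bounded x Hx) as [M HM].
  apply (qint_qorbit_lim q _ M Hq); [destruct Hx|]; auto.
Qed.

End Admissible.

Definition qRiccati_op (q : R) (R0 S T u : R -> R) (x : R) : R :=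
  qderiv q u x - T x * u x + R0 x * u (q * x) + S x * u x * u (q * x).

Lemma qRiccati_op_sub (q : R) (R0 S T u v : R -> R) (x : R) : q <> 1 -> x <> 0 ->
  (1 - q) * x * (qRiccati_op q R0 S T v x - qRiccati_op q R0 S T u x)
  = (v x - u x) * Eu_den q S T u x - (v (q * x) - u (q * x)) * Eu_num q R0 S v x.
Proof.
  intros Hq Hx. unfold qRiccati_op, qderiv, Eu_num, Eu_den. field.
  split; [exact Hx | intros H; apply Hq; lra].
Qed.

Section Bplus.
Variables (q : R) (b : Rbar) (R0 S T u : R -> R) (t : R).
Hypothesis Hq : 0 < q < 1.
Hypotheses (HR : cont_on b R0) (HS : cont_on b S) (HT : cont_on b T).
Hypothesis Hu : admissible q b R0 S T u.
Hypothesis Ht : Bplus_defined q b R0 S T t u.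

Let E := Eu q R0 S T u.
Let J := Ju q R0 S T u.
Let v := Bplus q R0 S T t u.

Lemma Eu_num_Bplus (x : R) : inI b x ->
  Eu_num q R0 S v x = Eu_num q R0 S u x * (1 + t * J (q * x)) / (1 + t * J x).
Proof.
  intros Hx. pose proof (Ju_step q b R0 S T u Hq HR HS HT Hu x Hx) as HJ.
  destruct (Eu_num_den_pos q b R0 S T u Hu x Hx) as [HA _]. pose proof (Ht x Hx).
  replace (J (q * x)) with (J x - (1 - q) * x * (S x * E x / Eu_num q R0 S u x))
    by (unfold J, E; lra).
  unfold v, Bplus, Eu_num in *. fold E J. field. split; [lra | assumption].
Qed.

Lemma Eu_den_Bplus (x : R) : inI b x ->
  Eu_den q S T v x = Eu_den q S T u x * (1 + t * J x) / (1 + t * J (q * x)).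
Proof.
  intros Hx. pose proof (Ju_step q b R0 S T u Hq HR HS HT Hu x Hx) as HJ.
  pose proof (Eu_step q b R0 S T u Hq HR HS HT Hu x Hx) as HE.
  destruct (Eu_num_den_pos q b R0 S T u Hu x Hx) as [HA HB].
  pose proof (Ht (q * x) (inI_q b q x Hq Hx)) as Hd.
  fold E J in HJ, HE, Hd |- *. rewrite HJ.
  replace (E x) with (E (q * x) * Eu_num q R0 S u x / Eu_den q S T u x)
    by (rewrite <- HE; field; lra).
  unfold v, Bplus, Eu_num, Eu_den in *. fold E J. field. repeat split; lra.
Qed.

Lemma qRiccati_op_Bplus (x : R) : inI b x -> x <> 0 ->
  qRiccati_op q R0 S T v x = qRiccati_op q R0 S T u x.
Proof.
  intros Hx Hx0. pose proof (qRiccati_op_sub q R0 S T u v x ltac:(lra) Hx0) as Hsub.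
  rewrite Eu_num_Bplus in Hsub by exact Hx.
  pose proof (Eu_step q b R0 S T u Hq HR HS HT Hu x Hx) as HE.
  pose proof (Ht x Hx). pose proof (Ht (q * x) (inI_q b q x Hq Hx)).
  replace ((v x - u x) * Eu_den q S T u x
           - (v (q * x) - u (q * x)) * (Eu_num q R0 S u x * (1 + t * J (q * x)) / (1 + t * J x)))
    with (t * (E x * Eu_den q S T u x - E (q * x) * Eu_num q R0 S u x) / (1 + t * J x)) in Hsub
    by (unfold v, Bplus; fold E J; field; split; assumption).
  fold E in HE. rewrite HE, Rminus_diag, Rmult_0_r, Rdiv_0_l in Hsub.
  apply Rmult_integral in Hsub as [Ha|Hd]; [|lra].
  exfalso. apply Rmult_integral in Ha as [Ha|Ha]; lra.
Qed.

Hypothesis Hv : admissible q b R0 S T v.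

Lemma Eu_Bplus (x : R) : inI b x -> Eu q R0 S T v x = E x / (1 + t * J x) ^ 2.
Proof.
  intros Hx.
  set (h y := Eu q R0 S T v y * ((1 + t * J y) * (1 + t * J y)) / E y).
  assert (Hh : h x = 1).
  { apply (qinvariant_lim_eq b q h x 1 Hq); auto.
    - intros y Hy. pose proof (Eu_step q b R0 S T v Hq HR HS HT Hv y Hy) as HEv.
      rewrite Eu_num_Bplus, Eu_den_Bplus in HEv by exact Hy.
      pose proof (Eu_step q b R0 S T u Hq HR HS HT Hu y Hy) as HE. fold E in HE.
      destruct (Eu_num_den_pos q b R0 S T u Hu y Hy) as [HA HB].
      pose proof (Eu_pos q R0 S T u (q * y)) as He. fold E in He.
      pose proof (Ht y Hy) as HD. pose proof (Ht (q * y) (inI_q b q y Hq Hy)) as Hd.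
      fold J in HD, Hd.
      assert (HEv' : Eu q R0 S T v y = Eu q R0 S T v (q * y)
          * (Eu_num q R0 S u y * (1 + t * J (q * y)) / (1 + t * J y))
          / (Eu_den q S T u y * (1 + t * J y) / (1 + t * J (q * y))))
        by (rewrite <- HEv; field; repeat split; lra).
      assert (HE' : E y = E (q * y) * Eu_num q R0 S u y / Eu_den q S T u y)
        by (rewrite <- HE; field; lra).
      unfold h. rewrite HEv', HE'. field. repeat split; lra.
    - replace (Finite 1) with (Finite (1 * ((1 + t * 0) * (1 + t * 0)) / 1)) by (f_equal; field).
      apply is_lim_seq_div'; [apply is_lim_seq_mult'; [|apply is_lim_seq_mult']|..].
      + now apply (Eu_qorbit_lim q b R0 S T v).
      + apply is_lim_seq_plus', is_lim_seq_mult';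
          [apply is_lim_seq_const.. | now apply (Ju_qorbit_lim q b R0 S T u)].
      + apply is_lim_seq_plus', is_lim_seq_mult';
          [apply is_lim_seq_const.. | now apply (Ju_qorbit_lim q b R0 S T u)].
      + now apply (Eu_qorbit_lim q b R0 S T u).
      + lra. }
  pose proof (Eu_pos q R0 S T u x) as HE. pose proof (Ht x Hx) as HD.
  fold E J in HE, HD.
  transitivity (h x * (E x / (1 + t * J x) ^ 2)); [unfold h; field; lra | rewrite Hh; ring].
Qed.

Lemma Ju_Bplus (x : R) : inI b x -> Ju q R0 S T v x = J x / (1 + t * J x).
Proof.
  intros Hx. set (h y := Ju q R0 S T v y - J y / (1 + t * J y)).
  assert (Hh : h x = 0).
  { apply (qinvariant_lim_eq b q h x 0 Hq); auto.
    - intros y Hy. pose proof (Ju_step q b R0 S T v Hq HR HS HT Hv y Hy) as HJv.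
      rewrite Eu_Bplus, Eu_num_Bplus in HJv by exact Hy.
      assert (HJ : J y - J (q * y) = (1 - q) * y * (S y * E y / Eu_num q R0 S u y))
        by (pose proof (Ju_step q b R0 S T u Hq HR HS HT Hu y Hy); unfold J, E; lra).
      destruct (Eu_num_den_pos q b R0 S T u Hu y Hy) as [HA _].
      pose proof (Ht y Hy) as HD. pose proof (Ht (q * y) (inI_q b q y Hq Hy)) as Hd.
      fold J in HD, Hd.
      replace ((1 - q) * y * (S y * (E y / (1 + t * J y) ^ 2)
                / (Eu_num q R0 S u y * (1 + t * J (q * y)) / (1 + t * J y))))
        with ((J y - J (q * y)) / ((1 + t * J y) * (1 + t * J (q * y)))) in HJv
        by (rewrite HJ; field; repeat split; lra).
      unfold h. rewrite HJv. field. split; assumption.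
    - replace (Finite 0) with (Finite (0 - 0 / (1 + t * 0))) by (f_equal; field; lra).
      apply is_lim_seq_minus'; [now apply (Ju_qorbit_lim q b R0 S T v)|].
      apply is_lim_seq_div'; [now apply (Ju_qorbit_lim q b R0 S T u)| |lra].
      apply is_lim_seq_plus', is_lim_seq_mult';
        [apply is_lim_seq_const.. | now apply (Ju_qorbit_lim q b R0 S T u)]. }
  unfold h in Hh. lra.
Qed.

Lemma Bplus_defined_add (t1 : R) :
  Bplus_defined q b R0 S T t1 v -> Bplus_defined q b R0 S T (t1 + t) u.
Proof.
  intros Ht1 x Hx. specialize (Ht1 x Hx). rewrite Ju_Bplus in Ht1 by exact Hx.
  pose proof (Ht x Hx) as HD. fold J in HD |- *.
  replace (1 + (t1 + t) * J x) with ((1 + t * J x) * (1 + t1 * (J x / (1 + t * J x))))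
    by (field; assumption).
  now apply Rmult_integral_contrapositive_currified.
Qed.

Lemma Bplus_Bplus (t1 x : R) : Bplus_defined q b R0 S T t1 v -> inI b x ->
  Bplus q R0 S T t1 v x = Bplus q R0 S T (t1 + t) u x.
Proof.
  intros Ht1 Hx. pose proof (Bplus_defined_add t1 Ht1 x Hx) as Hsum.
  specialize (Ht1 x Hx). rewrite Ju_Bplus in Ht1 by exact Hx.
  pose proof (Ht x Hx) as HD. fold J in Hsum, HD.
  unfold Bplus at 1. rewrite Eu_Bplus, Ju_Bplus by exact Hx.
  unfold v, Bplus. fold E J. field. repeat split; assumption.
Qed.

End Bplus.

Section Transitivity.
Variables (q : R) (b : Rbar) (R0 S T V u0 u : R -> R).
Hypothesis Hq : 0 < q < 1.
Hypotheses (HR : cont_on b R0) (HS : cont_on b S) (HT : cont_on b T).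
Hypotheses (Hu0 : admissible q b R0 S T u0) (Hs0 : qRiccati_sol q b R0 S T V u0).
Hypotheses (Hu : cont_on b u) (Hs : qRiccati_sol q b R0 S T V u).
Hypothesis HAu : forall x, inI b x -> 1 - (1 - q) * x * (R0 x + S x * u x) > 0.

Let w y := u y - u0 y.
Let E := Eu q R0 S T u0.
Let J := Ju q R0 S T u0.

Lemma qRiccati_sol_sub_step (y : R) : inI b y ->
  w y * Eu_den q S T u0 y = w (q * y) * Eu_num q R0 S u y.
Proof.
  intros Hy. destruct (Req_dec y 0) as [->|Hy0].
  { replace (q * 0) with 0 by ring. unfold Eu_num, Eu_den. ring. }
  pose proof (qRiccati_op_sub q R0 S T u0 u y ltac:(lra) Hy0) as Hsub.
  assert (Hop : qRiccati_op q R0 S T u y = qRiccati_op q R0 S T u0 y)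
    by (unfold qRiccati_op; now rewrite <- (Hs y Hy Hy0), <- (Hs0 y Hy Hy0)).
  rewrite Hop, Rminus_diag, Rmult_0_r in Hsub. unfold w. lra.
Qed.

Lemma qRiccati_sol_sub_eq0_q (y : R) : inI b y -> w y = 0 <-> w (q * y) = 0.
Proof.
  intros Hy. pose proof (qRiccati_sol_sub_step y Hy) as Hstep.
  destruct (Eu_num_den_pos q b R0 S T u0 Hu0 y Hy) as [_ HB].
  assert (HA : 0 < Eu_num q R0 S u y) by (pose proof (HAu y Hy); unfold Eu_num; lra).
  split; intros H0; rewrite H0, Rmult_0_l in Hstep.
  - apply eq_sym, Rmult_integral in Hstep as [H|H]; lra.
  - apply Rmult_integral in Hstep as [H|H]; lra.
Qed.

Lemma qRiccati_sol_sub_invariant (y : R) : inI b y -> w y <> 0 ->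
  E (q * y) / w (q * y) - J (q * y) = E y / w y - J y.
Proof.
  intros Hy Hw. pose proof (qRiccati_sol_sub_step y Hy) as Hstep.
  pose proof (Eu_step q b R0 S T u0 Hq HR HS HT Hu0 y Hy) as HE.
  pose proof (Ju_step q b R0 S T u0 Hq HR HS HT Hu0 y Hy) as HJ.
  destruct (Eu_num_den_pos q b R0 S T u0 Hu0 y Hy) as [HA0 HB0].
  assert (HA : 0 < Eu_num q R0 S u y) by (pose proof (HAu y Hy); unfold Eu_num; lra).
  assert (HAw : Eu_num q R0 S u y = Eu_num q R0 S u0 y - (1 - q) * y * S y * w y)
    by (unfold Eu_num, w; ring).
  fold E J in HE, HJ. rewrite HJ.
  replace (w (q * y)) with (w y * Eu_den q S T u0 y / Eu_num q R0 S u y)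
    by (rewrite Hstep; field; lra).
  replace (E y) with (E (q * y) * Eu_num q R0 S u0 y / Eu_den q S T u0 y)
    by (rewrite <- HE; field; lra).
  rewrite HAw in HA |- *. field. repeat split; lra.
Qed.

Lemma qRiccati_sol_sub_qorbit_lim (x : R) : inI b x -> is_lim_seq (fun n => w (q ^ n * x)) (w 0).
Proof.
  intros Hx. apply is_lim_seq_minus'; apply (cont_on_qorbit_lim b); auto. apply Hu0.
Qed.

Lemma qRiccati_sol_sub_eq (x : R) : inI b x -> w x * (1 + w 0 * J x) = w 0 * E x.
Proof.
  intros Hx. destruct (Req_dec (w x) 0) as [Hw|Hw].
  - assert (Hw0 : 0 = w 0).
    { apply (is_lim_seq_const_eq (fun n => w (q ^ n * x)));
        [|now apply qRiccati_sol_sub_qorbit_lim].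
      apply (qorbit_ind b q (fun y => w y = 0)); auto.
      intros y Hy. apply qRiccati_sol_sub_eq0_q, Hy. }
    rewrite Hw, <- Hw0. ring.
  - set (c := E x / w x - J x).
    assert (Horb : forall n,
      w (q ^ n * x) <> 0 /\ E (q ^ n * x) / w (q ^ n * x) - J (q ^ n * x) = c).
    { apply (qorbit_ind b q (fun y => w y <> 0 /\ E y / w y - J y = c)); auto.
      intros y Hy [Hwy Hc]. split.
      - now rewrite <- qRiccati_sol_sub_eq0_q.
      - now rewrite qRiccati_sol_sub_invariant. }
    assert (Hlim : is_lim_seq (fun n => E (q ^ n * x)) (w 0 * (0 + c))).
    { apply (is_lim_seq_ext (fun n => w (q ^ n * x) * (J (q ^ n * x) + c))).
      - intros n. destruct (Horb n) as [Hwn Hcn]. rewrite <- Hcn. field. exact Hwn.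
      - apply is_lim_seq_mult'; [now apply qRiccati_sol_sub_qorbit_lim|].
        apply is_lim_seq_plus';
          [now apply (Ju_qorbit_lim q b R0 S T u0) | apply is_lim_seq_const]. }
    pose proof (Eu_qorbit_lim q b R0 S T u0 Hq HR HS HT Hu0 x Hx) as HE1. fold E in HE1.
    apply is_lim_seq_unique in Hlim, HE1. rewrite HE1 in Hlim.
    injection Hlim as Hc1. unfold c in Hc1.
    transitivity (w x * (w 0 * (0 + (E x / w x - J x)) + w 0 * J x)); [rewrite <- Hc1; ring|].
    field. exact Hw.
Qed.

Lemma qRiccati_sol_Bplus_defined : Bplus_defined q b R0 S T (u 0 - u0 0) u0.
Proof.
  change (Bplus_defined q b R0 S T (w 0) u0). intros x Hx HD.
  pose proof (qRiccati_sol_sub_eq x Hx) as Heq. fold J in HD.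
  rewrite HD, Rmult_0_r in Heq. pose proof (Eu_pos q R0 S T u0 x) as HE. fold E in HE.
  assert (Hw0 : w 0 = 0) by (apply eq_sym, Rmult_integral in Heq as [H|H]; lra).
  rewrite Hw0 in HD. lra.
Qed.

Lemma qRiccati_sol_eq_Bplus (x : R) : inI b x -> u x = Bplus q R0 S T (u 0 - u0 0) u0 x.
Proof.
  intros Hx. change (u x = Bplus q R0 S T (w 0) u0 x). pose proof (qRiccati_sol_sub_eq x Hx) as Heq.
  pose proof (qRiccati_sol_Bplus_defined x Hx) as HD. fold J in HD.
  unfold Bplus. fold E J. rewrite <- Heq. unfold w. field. exact HD.
Qed.

End Transitivity.

Theorem proposition4 (q : R) (b : Rbar) (R0 S T : R -> R) :
  0 < q < 1 -> Rbar_lt (Finite 0) b ->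
  cont_on b R0 -> cont_on b S -> cont_on b T ->
  (* composition law *)
  (forall (t1 t2 : R) (u0 : R -> R),
     admissible q b R0 S T u0 ->
     Bplus_defined q b R0 S T t2 u0 ->
     admissible q b R0 S T (Bplus q R0 S T t2 u0) ->
     Bplus_defined q b R0 S T t1 (Bplus q R0 S T t2 u0) ->
     (forall x, inI b x ->
        1 - (1 - q) * x * (R0 x + S x * Bplus q R0 S T t1 (Bplus q R0 S T t2 u0) x) > 0) ->
     Bplus_defined q b R0 S T (t1 + t2) u0 /\
     (forall x, inI b x ->
        Bplus q R0 S T t1 (Bplus q R0 S T t2 u0) x = Bplus q R0 S T (t1 + t2) u0 x))
  /\
  (* B^+_t maps solutions of the q-Riccati equation to solutions (where defined) *)
  (forall (V : R -> R) (t : R) (u0 : R -> R),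
     admissible q b R0 S T u0 -> qRiccati_sol q b R0 S T V u0 ->
     Bplus_defined q b R0 S T t u0 ->
     qRiccati_sol q b R0 S T V (Bplus q R0 S T t u0))
  /\
  (* transitivity on solutions *)
  (forall (V : R -> R) (u0 u : R -> R),
     admissible q b R0 S T u0 -> qRiccati_sol q b R0 S T V u0 ->
     cont_on b u -> qRiccati_sol q b R0 S T V u ->
     (forall x, inI b x -> 1 - (1 - q) * x * (R0 x + S x * u x) > 0) ->
     Bplus_defined q b R0 S T (u 0 - u0 0) u0 /\
     (forall x, inI b x -> u x = Bplus q R0 S T (u 0 - u0 0) u0 x)).
Proof.
  intros Hq _ HR HS HT. split; [|split].
  - (* admissibility of B^+_{t2} u0 suffices *)
    intros t1 t2 u0 Hu0 Ht2 Hv Ht1 _. split.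
    + exact (Bplus_defined_add q b R0 S T u0 t2 Hq HR HS HT Hu0 Ht2 Hv t1 Ht1).
    + intros x. exact (Bplus_Bplus q b R0 S T u0 t2 Hq HR HS HT Hu0 Ht2 Hv t1 x Ht1).
  - intros V t u0 Hu0 Hsol Ht x Hx Hx0. rewrite (Hsol x Hx Hx0).
    symmetry. exact (qRiccati_op_Bplus q b R0 S T u0 t Hq HR HS HT Hu0 Ht x Hx Hx0).
  - intros V u0 u Hu0 Hs0 Hu Hs HAu. split.
    + exact (qRiccati_sol_Bplus_defined q b R0 S T V u0 u Hq HR HS HT Hu0 Hs0 Hu Hs HAu).
    + exact (qRiccati_sol_eq_Bplus q b R0 S T V u0 u Hq HR HS HT Hu0 Hs0 Hu Hs HAu).
Qed.
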